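(* Let $(p_m)$ be a sequence of primes with $p_m\to\infty$, and let $c_m=(c_{m,1},\dots,c_{m,b})\in\mathbb{F}_{p_m}^b$. Assume that for every nonzero rational vector $(\alpha_1,\dots,\alpha_b)$, for almost all $m$ it is not the case that $\sum_{i=1}^b\alpha_ic_{m,i}=0$ in $\mathbb{F}_{p_m}$. Let $U$ be a nonempty open subset of $\mathbb{T}^b$, let $k\in\mathbb{N}$ and $l\in(\mathbb{Z}/k\mathbb{Z})^*$. Then for arbitrarily large $m$ there is $e_m\in\mathbb{N}$ with $e_m\equiv l\pmod k$ and $\Psi_{p_m}(e_mc_m)\in U$.
   Context: $\mathbb{T}=\{z\in\mathbb{C}:|z|=1\}$; $\Psi_p(n+p\mathbb{Z})=\exp(2\pi i n/p)$ is the standard additive character of $\mathbb{F}_p$, applied coordinatewise to tuples. *)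

From Stdlib Require Import Reals ZArith QArith Znumtheory List.
From Coquelicot Require Import Coquelicot.

Definition Ib (b : nat) : Type := { i : nat | (i < b)%nat }.

Definition torus_pt (b : nat) (z : Ib b -> C) : Prop :=
  forall i : Ib b, Cmod (z i) = 1%R.

Definition open_in_torus (b : nat) (U : (Ib b -> C) -> Prop) : Prop :=
  (forall z, U z -> torus_pt b z) /\
  (forall z, U z -> exists eps : R, (0 < eps)%R /\
     forall w, torus_pt b w -> (forall i, (Cmod (Cminus (w i) (z i)) < eps)%R) -> U w).

Definition Psi (p n : Z) : C :=
  (cos (2 * PI * IZR n / IZR p), sin (2 * PI * IZR n / IZR p)).

Definition zsum (b : nat) (f : nat -> Z) : Z :=
  fold_right Z.add 0%Z (map f (seq 0 b)).

(* "sum_{i<b} alpha_i c_i = 0 in F_p": every alpha_i (in lowest terms) has a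
   denominator invertible mod p, r_i is its image in F_p, and p | sum r_i c_i.
   (When p divides some denominator the expression is undefined; we then count it
   as "not zero". Since p_m -> oo this only concerns finitely many m.) *)
Definition qsum_zero_mod (p : Z) (b : nat) (alpha : nat -> Q) (c : nat -> Z) : Prop :=
  (forall i, (i < b)%nat -> ~ (p | Zpos (Qden (Qred (alpha i))))%Z) /\
  exists r : nat -> Z,
    (forall i, (i < b)%nat ->
       (p | r i * Zpos (Qden (Qred (alpha i))) - Qnum (Qred (alpha i)))%Z) /\
    (p | zsum b (fun i => r i * c i))%Z.

(** Write a point of [U] as [(cis a_i)_i] and test the residues [e_j = l + k j], [0 <= j < p],
    which run over all of [F_p] as soon as [p] does not divide [k].  Weight each [e] by [prod_i K_N (2 pi e c_i / p - a_i)], where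
    [K_N y = (1 + cos y)^N = sum_{|n| <= N} w_n cis (n y)] with [w_n >= 0].  Summing over [j]
    and expanding, a frequency vector [n] survives only if [sum_i n_i c_i = 0] in [F_p]; by
    nondegeneracy, for [m] large this forces [n = 0], so the sum is [p w_0^b], and
    [w_0 >= 2^N / (2N + 1)].  If for every [j] some phase had cosine at most [1 - g], each
    product would be at most [(1 - g/2)^N 2^(N b)], which is too small once
    [(2N + 1)^b (1 - g/2)^N < 1]. *)

From Stdlib Require Import Reals ZArith QArith Znumtheory List Lra Lia Classical.
From Coquelicot Require Import Coquelicot.

Open Scope R_scope.

Definition cis (x : R) : C := (cos x, sin x).

Lemma cis_add x y : cis (x + y) = (cis x * cis y)%C.
Proof. unfold cis, Cmult; simpl. rewrite cos_plus, sin_plus. f_equal; ring. Qed.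

Lemma cis_0 : cis 0 = RtoC 1.
Proof. unfold cis, RtoC. now rewrite cos_0, sin_0. Qed.

Lemma Cmod_cis x : Cmod (cis x) = 1.
Proof.
  unfold Cmod, cis; simpl. pose proof (sin2_cos2 x) as H. unfold Rsqr in H.
  replace (cos x * (cos x * 1) + sin x * (sin x * 1)) with 1 by lra. apply sqrt_1.
Qed.

Lemma cis_2PI_nat x (n : nat) : cis (x + 2 * PI * INR n) = cis x.
Proof.
  unfold cis. replace (x + 2 * PI * INR n) with (x + 2 * INR n * PI) by ring.
  now rewrite cos_period, sin_period.
Qed.

Lemma cis_2PI_int x (n : Z) : cis (x + 2 * PI * IZR n) = cis x.
Proof.
  destruct (Z.le_ge_cases 0 n) as [Hn | Hn].
  - rewrite <- (Z2Nat.id n Hn), <- INR_IZR_INZ. apply cis_2PI_nat.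
  - rewrite <- (cis_2PI_nat (x + 2 * PI * IZR n) (Z.to_nat (- n))).
    rewrite INR_IZR_INZ, Z2Nat.id, opp_IZR by lia. f_equal. ring.
Qed.

Lemma cis_eq_1 x : cis x = RtoC 1 -> exists n : Z, x = 2 * PI * IZR n.
Proof.
  intros H. injection H as Hcos Hsin.
  pose proof (cos_2a_sin (x / 2)) as Hc. replace (2 * (x / 2)) with x in Hc by field.
  destruct (sin_eq_0_0 (x / 2)) as [n Hn]; [nra|].
  exists n. lra.
Qed.

Definition csum {A} (l : list A) (f : A -> C) : C :=
  fold_right (fun a acc => f a + acc)%C (RtoC 0) l.
Definition rsum {A} (l : list A) (f : A -> R) : R :=
  fold_right (fun a acc => f a + acc) 0 l.
Definition rprod {A} (l : list A) (f : A -> R) : R :=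
  fold_right (fun a acc => f a * acc) 1 l.

Lemma csum_app {A} (l1 l2 : list A) f : csum (l1 ++ l2) f = (csum l1 f + csum l2 f)%C.
Proof. induction l1 as [|a l1 IH]; simpl. - ring. - rewrite IH. ring. Qed.

Lemma csum_ext {A} (l : list A) f g : (forall a, In a l -> f a = g a) -> csum l f = csum l g.
Proof.
  induction l as [|a l IH]; intros H; simpl; [easy|].
  rewrite H by (left; reflexivity). f_equal. apply IH. intros; apply H; now right.
Qed.

Lemma csum_add {A} (l : list A) f g :
  csum l (fun a => f a + g a)%C = (csum l f + csum l g)%C.
Proof. induction l as [|a l IH]; simpl. - ring. - rewrite IH. ring. Qed.

Lemma csum_mul_l {A} (l : list A) x f : csum l (fun a => x * f a)%C = (x * csum l f)%C.
Proof. induction l as [|a l IH]; simpl. - ring. - rewrite IH. ring. Qed.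

Lemma csum_mul_r {A} (l : list A) x f : csum l (fun a => f a * x)%C = (csum l f * x)%C.
Proof. induction l as [|a l IH]; simpl. - ring. - rewrite IH. ring. Qed.

Lemma csum_comm {A B} (l1 : list A) (l2 : list B) (f : A -> B -> C) :
  csum l1 (fun a => csum l2 (f a)) = csum l2 (fun b => csum l1 (fun a => f a b)).
Proof.
  induction l1 as [|a l1 IH].
  - induction l2 as [|b l2 IH2]; simpl in *; [easy|]. rewrite <- IH2. ring.
  - change (csum (a :: l1) ?g) with (g a + csum l1 g)%C.
    rewrite IH, <- csum_add. easy.
Qed.

Lemma csum_flat_map {A B} (g : A -> list B) l f :
  csum (flat_map g l) f = csum l (fun a => csum (g a) f).
Proof. induction l as [|a l IH]; simpl; [easy|]. now rewrite csum_app, IH. Qed.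

Lemma csum_RtoC {A} (l : list A) f : csum l (fun a => RtoC (f a)) = RtoC (rsum l f).
Proof. induction l as [|a l IH]; simpl; [easy|]. now rewrite IH, RtoC_plus. Qed.

Lemma csum_const {A} (l : list A) x : csum l (fun _ => x) = (INR (length l) * x)%C.
Proof.
  induction l as [|a l IH]; cbn [length].
  - simpl. ring.
  - change (csum (a :: l) ?g) with (g a + csum l g)%C.
    rewrite IH, S_INR, RtoC_plus. ring.
Qed.

Lemma rsum_ge0 {A} (l : list A) f : (forall a, In a l -> 0 <= f a) -> 0 <= rsum l f.
Proof.
  induction l as [|a l IH]; intros H; simpl; [lra|].
  pose proof (H a (or_introl eq_refl)). assert (0 <= rsum l f) by (apply IH; intros; apply H; now right).
  unfold rsum in *. lra.
Qed.

Lemma rsum_le {A} (l : list A) f g : (forall a, In a l -> f a <= g a) -> rsum l f <= rsum l g.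
Proof.
  induction l as [|a l IH]; intros H; simpl; [lra|].
  pose proof (H a (or_introl eq_refl)). assert (rsum l f <= rsum l g) by (apply IH; intros; apply H; now right).
  unfold rsum in *. lra.
Qed.

Lemma rsum_const {A} (l : list A) x : rsum l (fun _ => x) = INR (length l) * x.
Proof.
  induction l as [|a l IH]; cbn [length]; [simpl; ring|].
  rewrite S_INR. change (rsum (a :: l) ?g) with (g a + rsum l g). rewrite IH. ring.
Qed.

Lemma rprod_bounds {A} (l : list A) f M :
  (forall a, In a l -> 0 <= f a <= M) -> 0 <= rprod l f <= M ^ length l.
Proof.
  induction l as [|a l IH]; intros H; simpl; [lra|].
  destruct (H a (or_introl eq_refl)). destruct IH; [intros; apply H; now right|].
  split; [apply Rmult_le_pos | apply Rmult_le_compat]; auto.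
Qed.

Lemma rprod_le_one_small {A} (l : list A) f M r :
  (forall a, In a l -> 0 <= f a <= M) -> 0 <= r ->
  (exists a, In a l /\ f a <= r * M) -> rprod l f <= r * M ^ length l.
Proof.
  induction l as [|a l IH]; intros H Hr [x [Hx Hfx]]; [destruct Hx|].
  destruct (H a (or_introl eq_refl)) as [Ha0 HaM].
  destruct (rprod_bounds l f M) as [P0 PM]; [intros; apply H; now right|].
  simpl. destruct Hx as [<- | Hx].
  - replace (r * (M * M ^ length l)) with ((r * M) * M ^ length l) by ring.
    apply Rmult_le_compat; auto.
  - assert (rprod l f <= r * M ^ length l) by (apply IH; [intros; apply H; now right | exact Hr | now exists x]).
    replace (r * (M * M ^ length l)) with (M * (r * M ^ length l)) by ring.
    apply Rmult_le_compat; auto.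
Qed.

Lemma cis_geometric_sum n x y :
  ((cis x - 1) * csum (seq 0 n) (fun j => cis (INR j * x + y)))%C
  = (cis (INR n * x + y) - cis y)%C.
Proof.
  induction n as [|n IH].
  - simpl. replace (0 * x + y) with y by ring. ring.
  - rewrite seq_S, csum_app, Cmult_plus_distr_l, IH, S_INR. cbn [csum fold_right]. rewrite Nat.add_0_l.
    replace ((INR n + 1) * x + y) with ((INR n * x + y) + x) by ring.
    rewrite (cis_add (INR n * x + y) x). ring.
Qed.

Lemma sum_cis_root_of_unity (M : nat) (u : Z) y :
  (0 < M)%nat -> ~ (Z.of_nat M | u)%Z ->
  csum (seq 0 M) (fun j => cis (INR j * (2 * PI * IZR u / INR M) + y)) = RtoC 0.
Proof.
  intros HM Hu. assert (HM0 : INR M <> 0) by (apply not_0_INR; lia).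
  set (x := 2 * PI * IZR u / INR M).
  assert (Hx : (cis x - 1)%C <> RtoC 0).
  { intros Hx. apply Hu.
    destruct (cis_eq_1 x) as [n Hn].
    { replace (cis x) with ((cis x - 1) + 1)%C by ring. rewrite Hx. ring. }
    exists n. apply eq_IZR. rewrite mult_IZR, <- INR_IZR_INZ.
    apply (Rmult_eq_reg_l (2 * PI)); [|pose proof PI_RGT_0; lra].
    replace (2 * PI * IZR u) with (x * INR M) by (unfold x; field; auto).
    rewrite Hn. ring. }
  assert (Hgeom := cis_geometric_sum M x y).
  replace (INR M * x + y) with (y + 2 * PI * IZR u) in Hgeom by (unfold x; field; auto).
  rewrite cis_2PI_int in Hgeom.
  transitivity (/ (cis x - 1) * ((cis x - 1) * csum (seq 0 M) (fun j => cis (INR j * x + y))))%C.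
  - field. exact Hx.
  - rewrite Hgeom. ring.
Qed.

Definition cospow (N : nat) (y : R) : R := (1 + cos y) ^ N.

Lemma cospow_bounds N y : 0 <= cospow N y <= 2 ^ N.
Proof.
  pose proof (COS_bound y). unfold cospow.
  split; [apply pow_le | apply pow_incr]; lra.
Qed.

(* A list of pairs (w, n) stands for the sum of the w cis (n y); [cospow_step] multiplies a
   term by 1 + cos y = 1 + (cis y + cis (- y)) / 2. *)
Definition trig_eval (t : R * Z) (y : R) : C := (RtoC (fst t) * cis (IZR (snd t) * y))%C.

Definition cospow_step (t : R * Z) : list (R * Z) :=
  (fst t, snd t) :: (fst t / 2, (snd t + 1)%Z) :: (fst t / 2, (snd t - 1)%Z) :: nil.

Fixpoint cospow_terms (N : nat) : list (R * Z) :=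
  match N with
  | O => (1, 0%Z) :: nil
  | S N => flat_map cospow_step (cospow_terms N)
  end.

Lemma cospow_step_eval t y :
  csum (cospow_step t) (fun s => trig_eval s y) = (RtoC (1 + cos y) * trig_eval t y)%C.
Proof.
  destruct t as [w n]. unfold cospow_step, trig_eval; simpl.
  rewrite plus_IZR, minus_IZR.
  replace ((IZR n + 1) * y) with (IZR n * y + y) by ring.
  replace ((IZR n - 1) * y) with (IZR n * y + - y) by ring.
  rewrite !cis_add. unfold cis, RtoC, Cmult, Cplus; simpl. rewrite cos_neg, sin_neg.
  f_equal; field.
Qed.

Lemma cospow_terms_eval N y :
  RtoC (cospow N y) = csum (cospow_terms N) (fun t => trig_eval t y).
Proof.
  induction N as [|N IH]; unfold cospow in *; simpl.
  - unfold trig_eval; simpl. rewrite Rmult_0_l, cis_0. ring.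
  - rewrite csum_flat_map, RtoC_mult, IH, <- csum_mul_l.
    apply csum_ext. intros t _. symmetry. apply cospow_step_eval.
Qed.

Lemma cospow_terms_freq N t : In t (cospow_terms N) -> (Z.abs (snd t) <= Z.of_nat N)%Z.
Proof.
  revert t; induction N as [|N IH]; intros t Ht; simpl in Ht.
  - destruct Ht as [<- | []]. simpl. lia.
  - apply in_flat_map in Ht as [s [Hs Ht]]. specialize (IH s Hs).
    destruct Ht as [<- | [<- | [<- | []]]]; simpl; lia.
Qed.

Definition const_coef (l : list (R * Z)) : R :=
  rsum l (fun t => if (snd t =? 0)%Z then fst t else 0).

Lemma csum_const_coef l x :
  csum l (fun t => RtoC (fst t) * (if (snd t =? 0)%Z then x else RtoC 0))%C
  = (RtoC (const_coef l) * x)%C.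
Proof.
  induction l as [|t l IH]; unfold const_coef in *; simpl.
  - ring.
  - rewrite IH, RtoC_plus. destruct (snd t =? 0)%Z; ring.
Qed.

(* Average (1 + cos y)^N over the (2N+1)-th roots of unity: all frequencies 0 < |n| <= N cancel,
   and the term at y = 0 alone is 2^N. *)
Lemma const_coef_cospow_lower N : 2 ^ N <= INR (2 * N + 1) * const_coef (cospow_terms N).
Proof.
  set (M := (2 * N + 1)%nat).
  assert (HM : INR M <> 0) by (apply not_0_INR; unfold M; lia).
  set (y := fun j : nat => INR j * (2 * PI / INR M)).
  assert (Hsum : rsum (seq 0 M) (fun j => cospow N (y j)) = INR M * const_coef (cospow_terms N)).
  { apply RtoC_inj. rewrite <- csum_RtoC, RtoC_mult.
    rewrite (csum_ext _ _ _ (fun j _ => cospow_terms_eval N (y j))), csum_comm.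
    rewrite Cmult_comm, <- csum_const_coef. apply csum_ext.
    intros [w n] Hin. unfold trig_eval; simpl fst; simpl snd. rewrite csum_mul_l. f_equal.
    destruct (Z.eqb_spec n 0) as [-> | Hn].
    - rewrite (csum_ext _ _ (fun _ => RtoC 1)), csum_const, length_seq; [ring|].
      intros. rewrite Rmult_0_l. apply cis_0.
    - rewrite <- (sum_cis_root_of_unity M n 0).
      + apply csum_ext. intros j _. f_equal. unfold y. field. auto.
      + unfold M; lia.
      + pose proof (cospow_terms_freq _ _ Hin) as Hb; simpl in Hb.
        intros [q Hq]. unfold M in Hq. rewrite Nat2Z.inj_add, Nat2Z.inj_mul in Hq.
        destruct (Z.lt_trichotomy q 0) as [Hq0 | [Hq0 | Hq0]]; nia. }
  rewrite <- Hsum. replace M with (S (2 * N)) by (unfold M; lia). cbn [seq].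
  change (rsum (0%nat :: ?l) ?g) with (g 0%nat + rsum l g).
  assert (0 <= rsum (seq 1 (2 * N)) (fun j => cospow N (y j))).
  { apply rsum_ge0. intros. apply cospow_bounds. }
  assert (cospow N (y 0%nat) = 2 ^ N).
  { unfold y, cospow. simpl INR. rewrite Rmult_0_l, cos_0. now replace (1 + 1) with 2 by ring. }
  lra.
Qed.

Lemma sum_cis_progression (p : Z) (l k : nat) (s : Z) y :
  prime p -> ~ (p | Z.of_nat k)%Z ->
  csum (seq 0 (Z.to_nat p)) (fun j => cis (2 * PI * IZR (Z.of_nat (l + k * j) * s) / IZR p + y))
  = if Zdivide_dec p s then (IZR p * cis y)%C else RtoC 0.
Proof.
  intros Hp Hk. pose proof (prime_ge_2 _ Hp) as Hp2.
  assert (HpR : IZR p = INR (Z.to_nat p)) by (rewrite INR_IZR_INZ, Z2Nat.id by lia; reflexivity).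
  assert (Hp0 : IZR p <> 0) by (apply not_0_IZR; lia).
  destruct (Zdivide_dec p s) as [[t ->] | Hs].
  - rewrite (csum_ext _ _ (fun _ => cis y)), csum_const, length_seq, HpR; [easy|].
    intros j _. rewrite <- (cis_2PI_int y (Z.of_nat (l + k * j) * t)). f_equal.
    rewrite !mult_IZR. field. exact Hp0.
  - rewrite <- (sum_cis_root_of_unity (Z.to_nat p) (Z.of_nat k * s)
                  (2 * PI * IZR (Z.of_nat l * s) / IZR p + y)).
    + apply csum_ext. intros j _. f_equal. rewrite <- HpR.
      rewrite Nat2Z.inj_add, Nat2Z.inj_mul, !mult_IZR, plus_IZR, mult_IZR, INR_IZR_INZ.
      field. exact Hp0.
    + lia.
    + rewrite Z2Nat.id by lia. intros Hd. apply prime_mult in Hd as [Hd | Hd]; tauto.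
Qed.

Definition lin_comb (c : nat -> Z) (I : list nat) (v : nat -> Z) : Z :=
  fold_right Z.add 0%Z (map (fun i => v i * c i)%Z I).

Lemma lin_comb_ext c I v w : (forall i, In i I -> v i = w i) -> lin_comb c I v = lin_comb c I w.
Proof. intros H. unfold lin_comb. f_equal. apply map_ext_in. intros i Hi. now rewrite H. Qed.

Definition small_relations_trivial (N : nat) (p : Z) (c : nat -> Z) (s : Z) (I : list nat) : Prop :=
  forall v : nat -> Z, (forall i, In i I -> (Z.abs (v i) <= Z.of_nat N)%Z) ->
    (p | s + lin_comb c I v)%Z -> forall i, In i I -> v i = 0%Z.

Definition update (v : nat -> Z) (i : nat) (n : Z) : nat -> Z :=
  fun j => if Nat.eqb j i then n else v j.

Lemma lin_comb_update_cons c i I v n : ~ In i I ->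
  lin_comb c (i :: I) (update v i n) = (n * c i + lin_comb c I v)%Z.
Proof.
  intros Hi. unfold lin_comb at 1; simpl. fold (lin_comb c I (update v i n)).
  unfold update at 1. rewrite Nat.eqb_refl, (lin_comb_ext c I _ v); [easy|].
  intros j Hj. unfold update. destruct (Nat.eqb_spec j i); congruence.
Qed.

Lemma small_relations_trivial_tail N p c s i I n :
  ~ In i I -> (Z.abs n <= Z.of_nat N)%Z -> small_relations_trivial N p c s (i :: I) ->
  small_relations_trivial N p c (s + n * c i) I.
Proof.
  intros Hi Hn Hrel v Hv Hdiv j Hj.
  assert (Hvj : update v i n j = 0%Z).
  { apply Hrel; [| | now right].
    - intros x [<- | Hx]; unfold update; [now rewrite Nat.eqb_refl|].
      destruct (Nat.eqb_spec x i); auto.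
    - rewrite lin_comb_update_cons by exact Hi. now rewrite Z.add_assoc. }
  unfold update in Hvj. destruct (Nat.eqb_spec j i); congruence.
Qed.

Lemma small_relations_trivial_head N p c s i I n :
  ~ In i I -> (Z.abs n <= Z.of_nat N)%Z -> small_relations_trivial N p c s (i :: I) ->
  (p | s + n * c i)%Z -> n = 0%Z.
Proof.
  intros Hi Hn Hrel Hdiv.
  assert (Hvi : update (fun _ => 0%Z) i n i = 0%Z).
  { apply Hrel; [| | now left].
    - intros x _. unfold update. destruct (Nat.eqb x i); lia.
    - rewrite lin_comb_update_cons by exact Hi.
      replace (lin_comb c I (fun _ => 0%Z)) with 0%Z; [now rewrite Z.add_0_r|].
      unfold lin_comb. clear. induction I; simpl in *; lia. }
  unfold update in Hvi. now rewrite Nat.eqb_refl in Hvi.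
Qed.

Section ProgressionSum.

Variables (N : nat) (p : Z) (l k : nat) (c : nat -> Z) (a : nat -> R).

Definition phase (i e : nat) : R := 2 * PI * IZR (Z.of_nat e * c i) / IZR p - a i.

Definition twisted_sum (s : Z) (y : R) (I : list nat) : C :=
  csum (seq 0 (Z.to_nat p)) (fun j =>
    cis (2 * PI * IZR (Z.of_nat (l + k * j) * s) / IZR p + y)
    * RtoC (rprod I (fun i => cospow N (phase i (l + k * j)))))%C.

Lemma twisted_sum_cons s y i I :
  twisted_sum s y (i :: I)
  = csum (cospow_terms N) (fun t =>
      RtoC (fst t) * twisted_sum (s + snd t * c i) (y - IZR (snd t) * a i) I)%C.
Proof.
  unfold twisted_sum. rewrite (csum_ext _ _ (fun t => csum _ (fun j => _)) (fun t _ => eq_sym (csum_mul_l _ _ _))).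
  rewrite <- csum_comm. apply csum_ext. intros j _.
  change (rprod (i :: I) ?f) with (f i * rprod I f).
  rewrite RtoC_mult, cospow_terms_eval, <- csum_mul_r, <- csum_mul_l. apply csum_ext.
  intros [w n] _. unfold trig_eval; simpl fst; simpl snd.
  set (P := RtoC (rprod I _)).
  transitivity (RtoC w * (cis (2 * PI * IZR (Z.of_nat (l + k * j) * s) / IZR p + y)
      * cis (IZR n * phase i (l + k * j)) * P))%C; [ring|].
  rewrite <- cis_add. unfold phase. do 3 f_equal.
  rewrite Z.mul_add_distr_l, plus_IZR, !mult_IZR. unfold Rdiv. ring.
Qed.

Hypotheses (Hp : prime p) (Hpk : ~ (p | Z.of_nat k)%Z).

(* Each frequency vector n contributes iff p | s + sum n_i c_i; by hypothesis only n = 0 does. *)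
Lemma twisted_sum_eq s y I : NoDup I -> small_relations_trivial N p c s I ->
  twisted_sum s y I
  = if Zdivide_dec p s
    then (IZR p * cis y * RtoC (const_coef (cospow_terms N) ^ length I))%C
    else RtoC 0.
Proof.
  intros HI. revert s y. induction HI as [|i I Hi HI IH]; intros s y Hrel.
  - unfold twisted_sum; simpl rprod.
    rewrite csum_mul_r, sum_cis_progression by assumption.
    destruct (Zdivide_dec p s); simpl; ring.
  - rewrite twisted_sum_cons.
    rewrite (csum_ext _ _ (fun t => RtoC (fst t) * (if (snd t =? 0)%Z then
        (if Zdivide_dec p s then (IZR p * cis y * RtoC (const_coef (cospow_terms N) ^ length I))%C
         else RtoC 0) else RtoC 0))%C).
    + rewrite csum_const_coef. simpl length.
      destruct (Zdivide_dec p s); [rewrite <- tech_pow_Rmult, RtoC_mult | ]; ring.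
    + intros [w n] Hin; simpl fst; simpl snd. f_equal.
      pose proof (cospow_terms_freq _ _ Hin) as Hn; simpl in Hn.
      rewrite IH by (apply small_relations_trivial_tail; assumption).
      destruct (Zdivide_dec p (s + n * c i)) as [Hd | Hd].
      * assert (n = 0%Z) as -> by (eapply small_relations_trivial_head; eassumption).
        rewrite Z.mul_0_l, Z.add_0_r in Hd. rewrite Z.eqb_refl, Rmult_0_l, Rminus_0_r.
        destruct (Zdivide_dec p s); [reflexivity | contradiction].
      * destruct (Z.eqb_spec n 0) as [-> | Hn0]; [|reflexivity].
        rewrite Z.mul_0_l, Z.add_0_r in Hd.
        destruct (Zdivide_dec p s); [contradiction | reflexivity].
Qed.

Lemma sum_rprod_cospow_progression I : NoDup I -> small_relations_trivial N p c 0 I ->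
  rsum (seq 0 (Z.to_nat p)) (fun j => rprod I (fun i => cospow N (phase i (l + k * j))))
  = IZR p * const_coef (cospow_terms N) ^ length I.
Proof.
  intros HI Hrel. apply RtoC_inj.
  assert (Hsum := twisted_sum_eq 0 0 I HI Hrel).
  destruct (Zdivide_dec p 0) as [_ | H0]; [|now destruct H0; exists 0%Z].
  rewrite cis_0, Cmult_1_r, <- RtoC_mult in Hsum. rewrite <- Hsum, <- csum_RtoC.
  apply csum_ext. intros j _. rewrite Z.mul_0_r, Rplus_0_r.
  unfold Rdiv. rewrite Rmult_0_r, Rmult_0_l, cis_0. ring.
Qed.

End ProgressionSum.

Lemma exists_phases_near_zero N p l k c a b g :
  prime p -> ~ (p | Z.of_nat k)%Z -> 0 < g <= 1 ->
  small_relations_trivial N p c 0 (seq 0 b) ->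
  INR (2 * N + 1) ^ b * (1 - g / 2) ^ N < 1 ->
  exists j, forall i, (i < b)%nat -> 1 - g < cos (phase p c a i (l + k * j)).
Proof.
  intros Hp Hpk Hg Hrel HN. apply NNPP. intros Hnone.
  set (r := (1 - g / 2) ^ N).
  set (q := const_coef (cospow_terms N)).
  assert (Hr : 0 <= r) by (apply pow_le; lra).
  assert (Hprod : forall j,
    rprod (seq 0 b) (fun i => cospow N (phase p c a i (l + k * j))) <= r * (2 ^ N) ^ b).
  { intros j. rewrite <- (length_seq b 0) at 2.
    apply rprod_le_one_small; [intros; apply cospow_bounds | exact Hr |].
    apply NNPP. intros Hfar. apply Hnone. exists j. intros i Hi.
    apply Rnot_le_lt. intros Hcos. apply Hfar. exists i. split; [apply in_seq; lia|].
    unfold r, cospow. rewrite <- Rpow_mult_distr. apply pow_incr.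
    pose proof (COS_bound (phase p c a i (l + k * j))). lra. }
  assert (Hq : q ^ b <= r * (2 ^ N) ^ b).
  { pose proof (prime_ge_2 _ Hp). assert (Hp0 : 0 < IZR p) by (apply IZR_lt; lia).
    apply (Rmult_le_reg_l (IZR p)); [exact Hp0|].
    rewrite <- (length_seq b 0) at 1. unfold q.
    rewrite <- (sum_rprod_cospow_progression N p l k c a Hp Hpk _ (seq_NoDup b 0) Hrel).
    rewrite <- (Rmult_1_l (r * _)), <- (Rmult_assoc (IZR p)).
    replace (IZR p * 1) with (INR (length (seq 0 (Z.to_nat p)))) by
      (rewrite length_seq, INR_IZR_INZ, Z2Nat.id by lia; ring).
    rewrite <- rsum_const. apply rsum_le. intros j _. apply Hprod. }
  assert (Hlow : (2 ^ N) ^ b <= INR (2 * N + 1) ^ b * q ^ b).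
  { rewrite <- Rpow_mult_distr. apply pow_incr.
    split; [apply pow_le; lra | apply const_coef_cospow_lower]. }
  assert (Hpos : 0 < (2 ^ N) ^ b) by (apply pow_lt, pow_lt; lra).
  assert (0 <= INR (2 * N + 1) ^ b) by (apply pow_le, pos_INR).
  assert (INR (2 * N + 1) ^ b * q ^ b <= INR (2 * N + 1) ^ b * (r * (2 ^ N) ^ b))
    by (apply Rmult_le_compat_l; assumption).
  assert (INR (2 * N + 1) ^ b * r * (2 ^ N) ^ b < 1 * (2 ^ N) ^ b)
    by (apply Rmult_lt_compat_r; assumption).
  lra.
Qed.

Lemma poly_mul_geom_lt_1 (b : nat) (r : R) : 0 < r < 1 ->
  exists N : nat, INR (2 * N + 1) ^ b * r ^ N < 1.
Proof.
  intros Hr.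
  set (d := / r - 1).
  assert (Hd : 0 < d).
  { unfold d. assert (1 < / r) by (rewrite <- Rinv_1; apply Rinv_lt_contravar; lra). lra. }
  set (K := 2 * (INR b + 1) / d + 1).
  assert (HK : 1 <= K).
  { assert (0 <= 2 * (INR b + 1) / d); [|unfold K; lra].
    apply Rmult_le_pos; [pose proof (pos_INR b); lra | left; apply Rinv_0_lt_compat, Hd]. }
  destruct (INR_unbounded (K ^ b / d)) as [T HT].
  assert (HKT : K ^ b < 1 + INR T * d).
  { apply (Rmult_lt_compat_r d) in HT; [|exact Hd].
    unfold Rdiv in HT. rewrite Rmult_assoc, Rinv_l in HT by lra. lra. }
  assert (HT0 := pos_INR T).
  exists ((b + 1) * T)%nat.
  (* Bernoulli: (1 + d)^T >= 1 + T d, while 2N + 1 <= K (1 + T d). *)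
  assert (Hbern : (1 + INR T * d) ^ (b + 1) <= (1 + d) ^ ((b + 1) * T)).
  { rewrite Nat.mul_comm, pow_mult. apply pow_incr. split; [nra | apply Rle_pow_lin; lra]. }
  assert (Hlin : INR (2 * ((b + 1) * T) + 1) <= K * (1 + INR T * d)).
  { rewrite plus_INR, !mult_INR, plus_INR. simpl INR. unfold K.
    assert (2 * (INR b + 1) / d * (INR T * d) = 2 * (INR b + 1) * INR T) by (field; lra).
    assert (0 <= 2 * (INR b + 1) / d)
      by (apply Rmult_le_pos; [pose proof (pos_INR b); lra | left; apply Rinv_0_lt_compat, Hd]).
    nra. }
  assert (Hpoly : INR (2 * ((b + 1) * T) + 1) ^ b < (1 + d) ^ ((b + 1) * T)).
  { eapply Rle_lt_trans; [apply pow_incr; split; [apply pos_INR | exact Hlin]|].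
    rewrite Rpow_mult_distr. eapply Rlt_le_trans; [|exact Hbern].
    rewrite Nat.add_1_r. simpl pow.
    assert (0 < (1 + INR T * d) ^ b) by (apply pow_lt; nra). nra. }
  assert (Hinv : r ^ ((b + 1) * T) * (1 + d) ^ ((b + 1) * T) = 1).
  { rewrite <- Rpow_mult_distr. unfold d. replace (r * (1 + (/ r - 1))) with 1 by (field; lra).
    apply pow1. }
  assert (0 < r ^ ((b + 1) * T)) by (apply pow_lt; lra).
  nra.
Qed.

Lemma Qred_inject_Z z : Qred (inject_Z z) = inject_Z z.
Proof.
  unfold Qred, inject_Z. pose proof (Z.ggcd_correct_divisors z 1) as H.
  pose proof (Z.ggcd_gcd z 1) as Hg. rewrite Z.gcd_1_r in Hg.
  destruct (Z.ggcd z 1) as [g [x y]]. simpl in Hg. subst g. destruct H as [H1 H2].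
  assert (y = 1%Z) by lia. assert (x = z) by lia. now subst x y.
Qed.

Definition nontrivial_relation (p : Z) (b : nat) (c : nat -> Z) (v : nat -> Z) : Prop :=
  (exists i, (i < b)%nat /\ v i <> 0%Z) /\ (p | lin_comb c (seq 0 b) v)%Z.

Fixpoint box (N r : nat) : list (nat -> Z) :=
  match r with
  | O => (fun _ => 0%Z) :: nil
  | S r => flat_map (fun w => map (update w r) (map (fun n => Z.of_nat n - Z.of_nat N)%Z
                                                    (seq 0 (2 * N + 1))))
                    (box N r)
  end.

Lemma box_complete N r v : (forall i, (i < r)%nat -> (Z.abs (v i) <= Z.of_nat N)%Z) ->
  exists w, In w (box N r) /\ forall i, (i < r)%nat -> w i = v i.
Proof.
  induction r as [|r IH]; intros Hv.
  - exists (fun _ => 0%Z). split; [now left | intros; lia].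
  - destruct IH as [w [Hw Hwv]]; [intros; apply Hv; lia|].
    exists (update w r (v r)). split.
    + apply in_flat_map. exists w. split; [exact Hw|]. apply in_map, in_map_iff.
      exists (Z.to_nat (v r + Z.of_nat N)). split.
      * specialize (Hv r (Nat.lt_succ_diag_r r)). lia.
      * apply in_seq. specialize (Hv r (Nat.lt_succ_diag_r r)). lia.
    + intros i Hi. unfold update. destruct (Nat.eqb_spec i r) as [-> | Hir]; [easy|].
      apply Hwv. lia.
Qed.

Lemma eventually_forall_in {A} (P : nat -> A -> Prop) (l : list A) :
  (forall x, In x l -> eventually (fun m => P m x)) ->
  eventually (fun m => forall x, In x l -> P m x).
Proof.
  induction l as [|x l IH]; intros H.
  - apply filter_forall. intros m y [].
  - apply (filter_imp (fun m => P m x /\ forall y, In y l -> P m y)).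
    + intros m [Hx Hl] y [<- | Hy]; auto.
    + apply filter_and; [apply H; now left | apply IH; intros; apply H; now right].
Qed.

Section Nondegeneracy.

Variables (b : nat) (p : nat -> Z) (c : nat -> nat -> Z).

Hypothesis Hprime : forall m, prime (p m).
Hypothesis Hnondeg : forall alpha : nat -> Q,
  (exists i, (i < b)%nat /\ ~ (alpha i == 0)%Q) ->
  eventually (fun m => ~ qsum_zero_mod (p m) b alpha (c m)).

Lemma eventually_no_relation v : eventually (fun m => ~ nontrivial_relation (p m) b (c m) v).
Proof.
  destruct (classic (exists i, (i < b)%nat /\ v i <> 0%Z)) as [Hv | Hv].
  2: { apply filter_forall. intros m [Hne _]. contradiction. }
  apply (filter_imp (fun m => ~ qsum_zero_mod (p m) b (fun i => inject_Z (v i)) (c m))).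
  2: { apply Hnondeg. destruct Hv as [i [Hi Hvi]]. exists i. split; [exact Hi|].
       intros H0. apply Hvi, inject_Z_injective, H0. }
  intros m Hm [_ Hdiv]. apply Hm. split.
  - intros i _ Hd. rewrite Qred_inject_Z in Hd. simpl in Hd.
    pose proof (prime_ge_2 _ (Hprime m)). apply Z.divide_pos_le in Hd; lia.
  - exists v. split; [|exact Hdiv].
    intros i _. rewrite Qred_inject_Z; simpl. rewrite Z.mul_1_r, Z.sub_diag. apply Z.divide_0_r.
Qed.

Lemma eventually_small_relations_trivial N :
  eventually (fun m => small_relations_trivial N (p m) (c m) 0 (seq 0 b)).
Proof.
  apply (filter_imp (fun m => forall w, In w (box N b) -> ~ nontrivial_relation (p m) b (c m) w)).
  2: { apply eventually_forall_in. intros w _. apply eventually_no_relation. }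
  intros m Hm v Hv Hdiv i Hi. apply in_seq in Hi.
  destruct (box_complete N b v) as [w [Hw Hwv]]; [intros j Hj; apply Hv, in_seq; lia|].
  destruct (Z.eq_dec (v i) 0) as [| Hvi]; [assumption|].
  exfalso. apply (Hm w Hw). split.
  - exists i. split; [lia|]. rewrite Hwv by lia. exact Hvi.
  - rewrite (lin_comb_ext _ _ w v); [exact Hdiv|].
    intros j Hj. apply in_seq in Hj. apply Hwv. lia.
Qed.

End Nondegeneracy.

Definition angle (u v : R) : R := if Rle_dec 0 v then acos u else - acos u.

Lemma cis_angle u v : u ^ 2 + v ^ 2 = 1 -> cis (angle u v) = (u, v).
Proof.
  intros H. assert (Hu : -1 <= u <= 1) by nra.
  assert (Hs : sqrt (1 - u²) = Rabs v).
  { replace (1 - u²) with (v²) by (unfold Rsqr; lra). apply sqrt_Rsqr_abs. }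
  unfold cis, angle. destruct (Rle_dec 0 v).
  - rewrite cos_acos, sin_acos, Hs, Rabs_right by (auto || lra). reflexivity.
  - rewrite cos_neg, sin_neg, cos_acos, sin_acos, Hs, Rabs_left by (auto || lra).
    f_equal. ring.
Qed.

Lemma torus_pt_angles b z : torus_pt b z ->
  exists a : nat -> R, forall i : Ib b, z i = cis (a (proj1_sig i)).
Proof.
  intros Hz.
  exists (fun i => match lt_dec i b with
           | left h => angle (fst (z (exist _ i h))) (snd (z (exist _ i h)))
           | right _ => 0
           end).
  intros [i h]; simpl. destruct (lt_dec i b) as [h' | ]; [|contradiction].
  rewrite (le_unique _ _ h' h). destruct (z (exist _ i h)) as [u v] eqn:Ez.
  symmetry. apply cis_angle.
  pose proof (Hz (exist _ i h)) as Hmod. rewrite Ez in Hmod. unfold Cmod in Hmod; cbn [fst snd] in Hmod.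
  apply (f_equal Rsqr) in Hmod. rewrite Rsqr_sqrt in Hmod by nra.
  rewrite Hmod. unfold Rsqr. ring.
Qed.

Lemma Cmod_cis_sub_lt x y eps : 0 < eps -> 1 - eps ^ 2 / 2 < cos (x - y) ->
  Cmod (cis x - cis y)%C < eps.
Proof.
  intros He Hc. unfold Cmod, cis, Cminus, Cplus, Copp; simpl.
  rewrite cos_minus in Hc.
  rewrite <- (sqrt_pow2 eps) by lra. apply sqrt_lt_1_alt. rewrite !Rmult_1_r. split; [apply Rplus_le_le_0_compat; apply Rle_0_sqr|].
  pose proof (sin2_cos2 x). pose proof (sin2_cos2 y). unfold Rsqr in *. nra.
Qed.

Theorem lemma3p9
  (b : nat) (p : nat -> Z) (c : nat -> nat -> Z)
  (Hprime : forall m, prime (p m))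
  (Hinf : forall N : Z, exists M : nat, forall m, (M <= m)%nat -> (N <= p m)%Z)
  (Hnondeg : forall alpha : nat -> Q,
      (exists i, (i < b)%nat /\ ~ (alpha i == 0)%Q) ->
      exists M : nat, forall m, (M <= m)%nat -> ~ qsum_zero_mod (p m) b alpha (c m))
  (U : (Ib b -> C) -> Prop)
  (HUopen : open_in_torus b U) (HUne : exists z, U z)
  (k : nat) (l : Z) (Hk : (0 < k)%nat) (Hl : Z.gcd l (Z.of_nat k) = 1%Z) :
  forall M : nat, exists m : nat, (M <= m)%nat /\
    exists e : nat, (Z.of_nat e mod Z.of_nat k = l mod Z.of_nat k)%Z /\
      U (fun i : Ib b => Psi (p m) (Z.of_nat e * c m (proj1_sig i))%Z).
Proof.
  intros M0.
  destruct HUne as [z Hz]. destruct HUopen as [Htorus Hopen].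
  destruct (Hopen z Hz) as [eps [Heps Hball]].
  destruct (torus_pt_angles b z (Htorus z Hz)) as [a Ha].
  set (g := Rmin (eps ^ 2 / 2) 1).
  assert (Hg : 0 < g <= 1) by (split; [apply Rmin_pos; nra | apply Rmin_r]).
  destruct (poly_mul_geom_lt_1 b (1 - g / 2)) as [N HN]; [lra|].
  destruct (filter_and _ _ (eventually_small_relations_trivial b p c Hprime Hnondeg N)
              (Hinf (Z.of_nat k + 1)%Z)) as [M HM].
  exists (Nat.max M0 M). split; [lia|].
  destruct (HM (Nat.max M0 M)) as [Hrel Hpk]; [lia|].
  set (m := Nat.max M0 M) in *.
  set (l' := Z.to_nat (l mod Z.of_nat k)).
  destruct (exists_phases_near_zero N (p m) l' k (c m) a b g (Hprime m)) as [j Hj]; try assumption.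
  { intros Hdiv. apply Z.divide_pos_le in Hdiv; lia. }
  exists (l' + k * j)%nat. split.
  - unfold l'. rewrite Nat2Z.inj_add, Nat2Z.inj_mul, Z2Nat.id by (apply Z.mod_pos_bound; lia).
    rewrite Z.mul_comm, Z.mod_add, Z.mod_mod; lia.
  - apply Hball; [intros i; apply Cmod_cis|].
    intros [i hi]. rewrite Ha. apply Cmod_cis_sub_lt; [exact Heps|].
    specialize (Hj i hi). unfold phase, g in Hj. cbn [proj1_sig].
    pose proof (Rmin_l (eps ^ 2 / 2) 1). lra.
Qed.
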